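(* Let $\mathcal C$ be a category with cofibrations (in the sense of Waldhausen) which is enriched over the category of abelian groups (hence additive), and let $w$ be an admissible class of morphisms in $\mathcal C$. Then $w$ satisfies Waldhausen's gluing axiom: given a commutative diagram $$y \leftarrow x \rightarrowtail z,\qquad y' \leftarrow x' \rightarrowtail z'$$ with $x\rightarrowtail z$ and $x'\rightarrowtail z'$ cofibrations and vertical morphisms $b\colon y\to y'$, $a\colon x\to x'$, $c\colon z\to z'$ all in $w$ and compatible with the horizontal maps, the induced morphism $b\sqcup_a c\colon y\sqcup_x z\to y'\sqcup_{x'} z'$ is in $w$. In particular $(\mathcal C,w)$ is a category with cofibrations and weak equivalences (Waldhausen category).
   Context: A cofibration sequence in $\mathcal C$ is a sequence $x\rightarrowtail y\twoheadrightarrow y/x$ where $x\rightarrowtail y$ is a cofibration and $y/x$ its cokernel (pushout along $x\to 0$). A class $w$ of morphisms in $\mathcal C$ is called admissible if: (i) $w$ contains all isomorphisms; (ii) $w$ satisfies two-out-of-three: for composable $x\xrightarrow{f}y\xrightarrow{g}z$, if two of $f,g,gf$ lie in $w$ so does the third; (iii) for any commutative diagram of cofibration sequences $x\rightarrowtail y\twoheadrightarrow y/x$ over $x'\rightarrowtail y'\twoheadrightarrow y'/x'$ with vertical maps $a\colon x\to x'$, $b\colon y\to y'$, $c\colon y/x\to y'/x'$, if two of $a,b,c$ are in $w$ then so is the third. *)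

From HB Require Import structures.
From mathcomp Require Import all_boot all_algebra.
Set Implicit Arguments. Unset Strict Implicit. Unset Printing Implicit Defensive.
Import GRing.Theory.
Local Open Scope ring_scope.

Record AbCat := {
  Obj :> Type;
  Hom : Obj -> Obj -> zmodType;
  idm : forall x, Hom x x;
  comp : forall x y z, Hom y z -> Hom x y -> Hom x z;
  compA : forall x y z t (f : Hom z t) (g : Hom y z) (h : Hom x y),
      comp f (comp g h) = comp (comp f g) h;
  comp1m : forall x y (f : Hom x y), comp (idm y) f = f;
  compm1 : forall x y (f : Hom x y), comp f (idm x) = f;
  compDl : forall x y z (f g : Hom y z) (h : Hom x y),
      comp (f + g) h = comp f h + comp g h;
  compDr : forall x y z (f : Hom y z) (g h : Hom x y),
      comp f (g + h) = comp f g + comp f h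
}.
Arguments idm {_} _.
Arguments comp {_ _ _ _}.
Notation "f \o\ g" := (comp f g) (at level 40, left associativity).

Section Defs.
Variable C : AbCat.

Definition is_iso (x y : C) (f : Hom x y) : Prop :=
  exists g : Hom y x, g \o\ f = idm x /\ f \o\ g = idm y.

(* o is a zero object: initial and terminal (existence of maps is given
   by the zero morphisms of the Ab-enrichment, so only uniqueness is needed) *)
Definition is_zero_object (o : C) : Prop :=
  (forall x (f g : Hom o x), f = g) /\ (forall x (f g : Hom x o), f = g).

Definition is_pushout (x y z p : C) (f : Hom x y) (g : Hom x z)
    (i : Hom y p) (j : Hom z p) : Prop :=
  i \o\ f = j \o\ g /\
  forall t (u : Hom y t) (v : Hom z t), u \o\ f = v \o\ g ->
    exists! h : Hom p t, h \o\ i = u /\ h \o\ j = v.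

Definition cof_class := forall x y : C, Hom x y -> Prop.

Definition is_cofibration_structure (o : C) (cof : cof_class) : Prop :=
  [/\
      (forall x y (f : Hom x y), is_iso f -> cof x y f),
      (forall x y z (f : Hom y z) (g : Hom x y),
          cof _ _ f -> cof _ _ g -> cof _ _ (f \o\ g)),
      (forall x (f : Hom o x), cof _ _ f) &
      (forall x y z (f : Hom x y) (g : Hom x z), cof _ _ g ->
          exists p (i : Hom y p) (j : Hom z p),
            is_pushout f g i j /\ cof _ _ i)].

Definition is_cofib_seq (o : C) (cof : cof_class) (x y q : C)
    (i : Hom x y) (p : Hom y q) : Prop :=
  cof _ _ i /\ exists (t : Hom x o) (s : Hom o q), is_pushout i t p s.

Definition admissible (o : C) (cof : cof_class) (w : cof_class) : Prop :=
  [/\ (forall x y (f : Hom x y), is_iso f -> w x y f),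
      (forall x y z (f : Hom x y) (g : Hom y z),
          [/\ (w _ _ f -> w _ _ g -> w _ _ (g \o\ f)),
              (w _ _ f -> w _ _ (g \o\ f) -> w _ _ g) &
              (w _ _ g -> w _ _ (g \o\ f) -> w _ _ f)]) &
      (forall x y q x' y' q' (i : Hom x y) (p : Hom y q)
              (i' : Hom x' y') (p' : Hom y' q')
              (a : Hom x x') (b : Hom y y') (c : Hom q q'),
          is_cofib_seq o cof i p -> is_cofib_seq o cof i' p' ->
          b \o\ i = i' \o\ a -> c \o\ p = p' \o\ b ->
          [/\ (w _ _ a -> w _ _ b -> w _ _ c),
              (w _ _ a -> w _ _ c -> w _ _ b) &
              (w _ _ b -> w _ _ c -> w _ _ a)])].

Definition gluing_axiom (cof : cof_class) (w : cof_class) : Prop :=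
  forall x y z x' y' z' p p' (f : Hom x y) (g : Hom x z)
         (f' : Hom x' y') (g' : Hom x' z')
         (a : Hom x x') (b : Hom y y') (c : Hom z z')
         (i : Hom y p) (j : Hom z p) (i' : Hom y' p') (j' : Hom z' p')
         (h : Hom p p'),
    cof _ _ g -> cof _ _ g' ->
    b \o\ f = f' \o\ a -> c \o\ g = g' \o\ a ->
    w _ _ a -> w _ _ b -> w _ _ c ->
    is_pushout f g i j -> is_pushout f' g' i' j' ->
    h \o\ i = i' \o\ b -> h \o\ j = j' \o\ c ->
    w _ _ h.

Definition is_waldhausen_category (o : C) (cof : cof_class) (w : cof_class)
  : Prop :=
  [/\ is_zero_object o, is_cofibration_structure o cof,
      (forall x y (f : Hom x y), is_iso f -> w x y f),
      (forall x y z (f : Hom x y) (g : Hom y z),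
          w _ _ f -> w _ _ g -> w _ _ (g \o\ f)) &
      gluing_axiom cof w].

End Defs.

(* The cokernel of [y >-> y ⊔_x z] is the cokernel [z/x] of [x >-> z] (pasting
   of pushouts), so the gluing data yields a map of cofibration sequences
   [y >-> y ⊔_x z ->> z/x] to [y' >-> y' ⊔_x' z' ->> z'/x'] whose middle
   component is [b ⊔_a c].  Admissibility applied to [x >-> z ->> z/x] puts the
   induced map [z/x -> z'/x'] in [w]; applied again, together with [b], it puts
   [b ⊔_a c] in [w]. *)
From Pilot Require Import Defs.
From mathcomp Require Import all_boot all_algebra.
Set Implicit Arguments. Unset Strict Implicit.
Import GRing.Theory.
Local Notation Hom := Defs.Hom.
Local Notation compA := Defs.compA.
Local Open Scope ring_scope.

Section Pushouts.
Variable C : AbCat.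

Lemma comp0m (x y z : C) (f : Hom x y) : (0 : Hom y z) \o\ f = 0.
Proof.
have e := compDl (0 : Hom y z) 0 f; rewrite addr0 in e.
by apply: (addrI (0 \o\ f)); rewrite addr0 -e.
Qed.

Lemma compm0 (x y z : C) (f : Hom y z) : f \o\ (0 : Hom x y) = 0.
Proof.
have e := compDr f (0 : Hom x y) 0; rewrite addr0 in e.
by apply: (addrI (f \o\ 0)); rewrite addr0 -e.
Qed.

Lemma pushout_ext (x y z p t : C) (f : Hom x y) (g : Hom x z) (i : Hom y p)
    (j : Hom z p) (h1 h2 : Hom p t) :
  is_pushout f g i j -> h1 \o\ i = h2 \o\ i -> h1 \o\ j = h2 \o\ j -> h1 = h2.
Proof.
move=> [e U] e1 e2.
have e' : (h2 \o\ i) \o\ f = (h2 \o\ j) \o\ g by rewrite -!compA e.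
have [k [_ uk]] := U t (h2 \o\ i) (h2 \o\ j) e'.
by rewrite -(uk h1 (conj e1 e2)) (uk h2 (conj erefl erefl)).
Qed.

Lemma pushout_sym (x y z p : C) (f : Hom x y) (g : Hom x z) (i : Hom y p)
    (j : Hom z p) :
  is_pushout f g i j -> is_pushout g f j i.
Proof.
move=> [e U]; split=> [|t u v euv]; first by rewrite e.
have [h [[h1 h2] uh]] := U t v u (esym euv).
by exists h; split=> // h' [? ?]; apply: uh.
Qed.

Lemma pushout_iso (x y z p0 p : C) (f : Hom x y) (g : Hom x z)
    (i0 : Hom y p0) (j0 : Hom z p0) (i : Hom y p) (j : Hom z p) :
  is_pushout f g i0 j0 -> is_pushout f g i j ->
  exists phi : Hom p0 p, is_iso phi /\ phi \o\ i0 = i.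
Proof.
move=> P0 P.
have [phi [[p1 p2] _]] := P0.2 p i j P.1.
have [psi [[q1 q2] _]] := P.2 p0 i0 j0 P0.1.
exists phi; split=> //; exists psi; split.
- by apply: (pushout_ext P0); rewrite -compA ?p1 ?p2 ?q1 ?q2 comp1m.
- by apply: (pushout_ext P); rewrite -compA ?p1 ?p2 ?q1 ?q2 comp1m.
Qed.

End Pushouts.

Section ZeroObject.
Variables (C : AbCat) (o : C).
Hypothesis o0 : is_zero_object o.

Lemma comp_zero_object (x y : C) (t : Hom x o) (s : Hom o y) : s \o\ t = 0.
Proof. by rewrite (o0.2 _ t 0) compm0. Qed.

Lemma cofib_seq_comp (cof : cof_class C) (x y q : C) (i : Hom x y)
    (p : Hom y q) :
  is_cofib_seq o cof i p -> p \o\ i = 0.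
Proof. by case=> _ [t [s [-> _]]]; apply: comp_zero_object. Qed.

Lemma cofib_seq_map (cof : cof_class C) (x z q x' z' q' : C) (g : Hom x z)
    (pi : Hom z q) (g' : Hom x' z') (pi' : Hom z' q') (a : Hom x x')
    (c : Hom z z') :
  is_cofib_seq o cof g pi -> is_cofib_seq o cof g' pi' ->
  c \o\ g = g' \o\ a -> exists cq : Hom q q', cq \o\ pi = pi' \o\ c.
Proof.
move=> [_ [t [s [_ U]]]] S' ec.
have e : (pi' \o\ c) \o\ g = 0 \o\ t.
  by rewrite -compA ec compA (cofib_seq_comp S') !comp0m.
by have [cq [[? _] _]] := U q' _ 0 e; exists cq.
Qed.

Lemma pushout_paste_cokernel (x y z p q : C) (f : Hom x y) (g : Hom x z)
    (i : Hom y p) (j : Hom z p) (tx : Hom x o) (ty : Hom y o) (s : Hom o q)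
    (pi : Hom z q) :
  is_pushout f g i j -> is_pushout g tx pi s ->
  exists rho : Hom p q, rho \o\ j = pi /\ is_pushout i ty rho s.
Proof.
move=> P Q.
have e0 : (s \o\ ty) \o\ f = pi \o\ g.
  by rewrite -compA (o0.2 _ (ty \o\ f) tx) Q.1.
have [rho [[ri rj] _]] := P.2 q (s \o\ ty) pi e0.
exists rho; split=> //; split=> // t u v euv.
have e1 : (u \o\ j) \o\ g = v \o\ tx.
  by rewrite -compA -P.1 compA euv -compA (o0.2 _ (ty \o\ f) tx).
have [k [[k1 k2] uk]] := Q.2 t (u \o\ j) v e1.
exists k; split.
- split=> //; apply: (pushout_ext P).
  + by rewrite -compA ri compA k2.
  + by rewrite -compA rj k1.
- by move=> k' [k'1 k'2]; apply: uk; rewrite -rj compA k'1.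
Qed.

End ZeroObject.

Section Cofibrations.
Variables (C : AbCat) (o : C) (cof : cof_class C).
Hypotheses (o0 : is_zero_object o) (Ccof : is_cofibration_structure o cof).

Lemma cof_pushout (x y z p : C) (f : Hom x y) (g : Hom x z) (i : Hom y p)
    (j : Hom z p) :
  cof g -> is_pushout f g i j -> cof i.
Proof.
case: Ccof => Ciso Ccomp _ Cpo cg P.
have [p1 [i1 [j1 [P1 ci1]]]] := Cpo _ _ _ f g cg.
have [phi [iso_phi <-]] := pushout_iso P1 P.
by apply: Ccomp => //; apply: Ciso.
Qed.

Lemma cofib_seq_exists (x z : C) (g : Hom x z) :
  cof g -> exists q (pi : Hom z q), is_cofib_seq o cof g pi.
Proof.
case: Ccof => _ _ _ Cpo cg.
have [q [s [pi [Q _]]]] := Cpo _ _ _ (0 : Hom x o) g cg.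
by exists q, pi; split=> //; exists 0, s; apply: pushout_sym.
Qed.

Lemma cofib_seq_cobase_change (x y z p q : C) (f : Hom x y) (g : Hom x z)
    (i : Hom y p) (j : Hom z p) (pi : Hom z q) :
  is_pushout f g i j -> is_cofib_seq o cof g pi ->
  exists rho : Hom p q, rho \o\ j = pi /\ is_cofib_seq o cof i rho.
Proof.
move=> P [cg [t [s Q]]].
have [rho [rj R]] := pushout_paste_cokernel o0 (0 : Hom y o) P Q.
by exists rho; split=> //; split; [apply: cof_pushout P | exists 0, s].
Qed.

Lemma admissible_gluing (w : cof_class C) :
  admissible o cof w -> gluing_axiom cof w.
Proof.
move=> [_ _ W3] x y z x' y' z' p p' f g f' g' a b c i j i' j' h
  cg cg' _ ec wa wb wc P P' hi hj.
have [q [pi S]] := cofib_seq_exists cg.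
have [q' [pi' S']] := cofib_seq_exists cg'.
have [rho [rj T]] := cofib_seq_cobase_change P S.
have [rho' [rj' T']] := cofib_seq_cobase_change P' S'.
have [cq cqE] := cofib_seq_map o0 S S' ec.
have w_cq : w _ _ cq.
  by case: (W3 _ _ _ _ _ _ _ _ _ _ a c cq S S' ec cqE) => /(_ wa wc).
have e : cq \o\ rho = rho' \o\ h.
  apply: (pushout_ext P).
  - rewrite -!compA (cofib_seq_comp o0 T) compm0 hi compA.
    by rewrite (cofib_seq_comp o0 T') comp0m.
  - by rewrite -!compA rj hj compA rj' cqE.
by case: (W3 _ _ _ _ _ _ _ _ _ _ b h cq T T' hi e) => _ /(_ wb w_cq).
Qed.

End Cofibrations.

Theorem lemma1p2 (C : AbCat) (o : C) (cof w : cof_class C) :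
  is_zero_object o -> is_cofibration_structure o cof ->
  admissible o cof w ->
  gluing_axiom cof w /\ is_waldhausen_category o cof w.
Proof.
move=> o0 Ccof Wadm.
have glue := admissible_gluing o0 Ccof Wadm.
case: Wadm => Wiso W23 _.
split=> //; split=> // x y z f g.
by case: (W23 _ _ _ f g).
Qed.
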